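(* Let $G$ be a prime tournament and $u\in V(G)$. Let $H_1,H_2$ be prime subtournaments of $G$ such that $V(H_1)\cup V(H_2)=V(G)\setminus\{u\}$, the subtournaments $H_1+u$ and $H_2+u$ are decomposable, and the subtournament $H_{1,2}$ induced on $V(H_1)\cap V(H_2)$ is prime with $|V(H_{1,2})|\ge 3$. Then either $u\in V_x(H_1)$ for some $x\in V(H_1)\setminus V(H_2)$, or $u\in V_y(H_2)$ for some $y\in V(H_2)\setminus V(H_1)$.
   Context: A tournament is a finite, non-null, loopless directed graph in which for any two distinct vertices $u,v$ there is exactly one edge with both ends in $\{u,v\}$. A subtournament is the tournament induced on a nonempty vertex subset; for a subtournament $H$ of $G$ and $v\in V(G)$, $H+v$ is the subtournament induced on $V(H)\cup\{v\}$. A homogeneous set of a tournament $G$ is a set $X\subseteq V(G)$ such that each vertex outside $X$ either has edges to all of $X$ or edges from all of $X$; it is nontrivial if $1<|X|<|V(G)|$. A tournament is prime if it has no nontrivial homogeneous set, and decomposable otherwise. For a subtournament $H$ of $G$ and $x\in V(H)$, $V_x(H)$ is the set of vertices $v\in V(G)\setminus V(H)$ such that $\{v,x\}$ is a homogeneous set of $H+v$. *)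

From mathcomp Require Import all_boot.
Set Implicit Arguments. Unset Strict Implicit. Unset Printing Implicit Defensive.

Definition is_tournament (T : finType) (adj : rel T) : Prop :=
  (forall x, ~~ adj x x) /\
  (forall x y, x != y -> (adj x y (+) adj y x)).

(* Subtournaments are identified with their (nonempty) vertex sets S.
   X is a homogeneous set of the subtournament induced on S. *)
Definition homogeneous (T : finType) (adj : rel T) (S X : {set T}) : bool :=
  (X \subset S) &&
  [forall v in S :\: X,
     [forall x in X, adj v x] || [forall x in X, adj x v]].

Definition nontrivial (T : finType) (S X : {set T}) : bool :=
  (1 < #|X|) && (#|X| < #|S|).

Definition prime_tour (T : finType) (adj : rel T) (S : {set T}) : bool :=
  [forall X : {set T}, ~~ (homogeneous adj S X && nontrivial S X)].

Definition decomposable (T : finType) (adj : rel T) (S : {set T}) : bool :=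
  ~~ prime_tour adj S.

Definition Vx (T : finType) (adj : rel T) (S : {set T}) (x : T) : {set T} :=
  [set v in ~: S | homogeneous adj (v |: S) [set v; x]].

From mathcomp Require Import all_boot.
Set Implicit Arguments. Unset Strict Implicit. Unset Printing Implicit Defensive.

(* Since H_1 and H_{1,2} are prime, the decomposability of H_1 + u leaves two
   possibilities: u has a twin x in H_1 (u is in V_x(H_1)), or u dominates or
   is dominated by all of H_1; the same holds for H_2.  A twin of u in the
   prime tournament H_{1,2} (|H_{1,2}| >= 3) is unique and excludes u being
   uniform on H_{1,2}.  Hence if all twins lie in H_{1,2}, either u has one
   common twin x in H_1 and H_2, so {u, x} is homogeneous in G, or u is
   uniform on both H_1 and H_2, in the same direction since they meet, so
   V(G) \ {u} is homogeneous in G; both contradict the primality of G. *)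

Section Tournaments.
Variables (T : finType) (adj : rel T).
Implicit Types (S X : {set T}) (v w x y : T).

Lemma homogeneousP S X :
  reflect (X \subset S /\ forall w, w \in S -> w \notin X ->
             {in X, forall x, adj w x} \/ {in X, forall x, adj x w})
          (homogeneous adj S X).
Proof.
apply: (iffP andP) => -[sXS hX]; split=> //.
  move=> w wS wX; have := forall_inP hX w; rewrite inE wX wS => /(_ isT).
  by case/orP=> /forall_inP; [left|right].
apply/forall_inP=> w; rewrite inE => /andP[wX wS].
by case: (hX w wS wX) => /forall_inP ->; rewrite ?orbT.
Qed.

Lemma hom_sub S S' X :
  homogeneous adj S X -> X \subset S' -> S' \subset S -> homogeneous adj S' X.
Proof.
move=> /homogeneousP[_ hX] sXS' sS'S; apply/homogeneousP; split=> // w wS'.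
exact: hX (subsetP sS'S w wS').
Qed.

Lemma hom_setU A B X :
  homogeneous adj A X -> homogeneous adj B X -> homogeneous adj (A :|: B) X.
Proof.
move=> /homogeneousP[sXA hA] /homogeneousP[_ hB]; apply/homogeneousP.
split=> [|w]; first exact: subset_trans sXA (subsetUl A B).
by rewrite inE => /orP[]; [exact: hA|exact: hB].
Qed.

Lemma hom_setD1 S X v :
  homogeneous adj S X -> homogeneous adj (S :\ v) (X :\ v).
Proof.
move=> /homogeneousP[sXS hX]; apply/homogeneousP; split; first exact: setSD.
move=> w; rewrite !inE => /andP[wv wS]; rewrite wv /= => wX.
by case: (hX w wS wX) => h; [left|right] => x /setD1P[_ /h].
Qed.

Lemma prime_hom_trivial S X :
  prime_tour adj S -> homogeneous adj S X -> 1 < #|X| -> #|S| <= #|X|.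
Proof.
move=> /forallP /(_ X) pS hX X_gt1; rewrite leqNgt; apply: contra pS => X_ltS.
by rewrite hX /nontrivial X_gt1.
Qed.

Lemma uniformP S v :
  v \notin S ->
  reflect ({in S, forall w, adj v w} \/ {in S, forall w, adj w v})
          (homogeneous adj (v |: S) S).
Proof.
move=> vS; apply: (iffP (homogeneousP _ _)) => [[_ hS]|hv].
  exact: hS (setU11 v S) vS.
split=> [|w]; first exact: subsetUr.
by rewrite !inE => /orP[/eqP->|->].
Qed.

Lemma uniform_sub S S' v :
  v \notin S -> S' \subset S ->
  homogeneous adj (v |: S) S -> homogeneous adj (v |: S') S'.
Proof.
move=> vS sS'S /(uniformP vS) hv.
have vS' : v \notin S' by apply: contra vS; apply: subsetP.
by apply/(uniformP vS'); case: hv => h; [left|right] => w /(subsetP sS'S)/h.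
Qed.

Lemma Vx_sub S S' v x :
  v \in Vx adj S x -> x \in S' -> S' \subset S -> v \in Vx adj S' x.
Proof.
rewrite !inE => /andP[vS hx] xS' sS'S.
rewrite (contra (subsetP sS'S v) vS); apply: (hom_sub hx); last exact: setUS.
by apply/subsetP=> z /set2P[]->; rewrite !inE ?eqxx ?xS' ?orbT.
Qed.

(* A nontrivial homogeneous set X of S + v either contains v, and then X \ v
   is homogeneous in S, so X = {v, x}; or X is contained in S, so X = S. *)
Lemma Vx_or_uniform S v :
  prime_tour adj S -> v \notin S -> decomposable adj (v |: S) ->
  (exists2 x, x \in S & v \in Vx adj S x) \/ homogeneous adj (v |: S) S.
Proof.
move=> pS vS /forallPn[X]; rewrite negbK => /and3P[hX X_gt1 X_lt].
have sXvS : X \subset v |: S by case/andP: hX.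
have card_vS : #|v |: S| = #|S|.+1 by rewrite cardsU1 vS.
have [vX|vX] := boolP (v \in X).
  have card_X : #|X| = #|X :\ v|.+1 by rewrite (cardsD1 v X) vX.
  have hXv : homogeneous adj S (X :\ v).
    by have := hom_setD1 v hX; rewrite setU1K.
  have /cards1P[x eXv] : #|X :\ v| == 1.
    rewrite eqn_leq leqNgt -[1 <= _]ltnS -card_X X_gt1 andbT.
    apply/negP => Xv_gt1; have := prime_hom_trivial pS hXv Xv_gt1.
    by rewrite -ltnS -card_X -card_vS leqNgt X_lt.
  have xS : x \in S.
    have /setD1P[xv xX] : x \in X :\ v by rewrite eXv set11.
    by move: (subsetP sXvS x xX); rewrite !inE (negbTE xv).
  left; exists x; rewrite // !inE vS.
  by have <- : X = [set v; x] by rewrite -(setD1K vX) eXv.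
have sXS : X \subset S.
  apply/subsetP=> z zX; have /setU1P[zv|//] := subsetP sXvS z zX.
  by rewrite -zv zX in vX.
have eXS : X = S.
  apply/eqP; rewrite eqEcard sXS; apply: prime_hom_trivial pS _ X_gt1.
  exact: hom_sub hX sXS (subsetUr _ _).
by right; rewrite -{2}eXS.
Qed.

Lemma Vx_or_uniform_in S S' v :
  prime_tour adj S -> v \notin S -> decomposable adj (v |: S) ->
  [\/ exists2 x, x \in S :\: S' & v \in Vx adj S x,
      exists2 x, x \in S :&: S' & v \in Vx adj S x |
      homogeneous adj (v |: S) S].
Proof.
move=> pS vS /(Vx_or_uniform pS vS)[[x xS vx]|]; last by constructor 3.
by have [xS'|xS'] := boolP (x \in S'); [constructor 2|constructor 1];
  exists x; rewrite // inE xS ?xS'.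
Qed.

Hypothesis tourn : is_tournament adj.

Lemma adj_asym x y : adj x y -> ~~ adj y x.
Proof.
case: tourn => irr tot; have [<-|xy] := eqVneq x y; first by rewrite (negbTE (irr x)).
by have := tot x y xy; case: (adj x y); case: (adj y x).
Qed.

Lemma adj_total x y : x != y -> adj x y || adj y x.
Proof. by case: tourn => _ tot /tot; case: (adj x y); case: (adj y x). Qed.

Lemma Vx_adj S v x w :
  v \in Vx adj S x -> w \in S -> w != x -> adj w v = adj w x /\ adj v w = adj x w.
Proof.
rewrite !inE => /andP[vS /homogeneousP[_ hx]] wS wx.
have wv : w != v by apply: contraNneq vS => <-.
have wvx : w \notin [set v; x] by rewrite !inE negb_or wv wx.
by case: (hx w (setU1r v wS) wvx) => h;
  have [hv hx'] := (h v (set21 v x), h x (set22 v x));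
  rewrite hv hx' (negbTE (adj_asym hv)) (negbTE (adj_asym hx')).
Qed.

Lemma hom_pair S x y :
  x \in S -> y \in S ->
  (forall w, w \in S -> w \notin [set x; y] ->
     adj w x = adj w y /\ adj x w = adj y w) ->
  homogeneous adj S [set x; y].
Proof.
move=> xS yS hxy; apply/homogeneousP; split.
  by apply/subsetP=> z /set2P[]->.
move=> w wS wxy; have [eadj_w eadj_x] := hxy w wS wxy.
have wx : w != x by apply: contraNneq wxy => ->; rewrite set21.
have /orP[h|h] := adj_total wx; [left|right] => z /set2P[]->;
  by rewrite -?eadj_w -?eadj_x.
Qed.

Lemma Vx_uniq S v x y :
  prime_tour adj S -> 2 < #|S| -> x \in S -> y \in S ->
  v \in Vx adj S x -> v \in Vx adj S y -> x = y.
Proof.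
move=> pS S_gt2 xS yS vx vy; apply/eqP/negPn/negP => xy.
have card_xy : #|[set x; y]| = 2 by rewrite cards2 xy.
have hxy : homogeneous adj S [set x; y].
  apply: hom_pair => // w wS; rewrite !inE negb_or => /andP[wx wy].
  have [lx rx] := Vx_adj vx wS wx; have [ly ry] := Vx_adj vy wS wy.
  by rewrite -lx -rx.
have := prime_hom_trivial pS hxy; rewrite card_xy => /(_ isT).
by rewrite leqNgt S_gt2.
Qed.

(* If v is uniform on S and twin to x, then S \ {x} is homogeneous in S. *)
Lemma Vx_not_uniform S v x :
  prime_tour adj S -> 2 < #|S| -> x \in S -> v \in Vx adj S x ->
  ~~ homogeneous adj (v |: S) S.
Proof.
move=> pS S_gt2 xS vx; have vS : v \notin S by move: vx; rewrite !inE => /andP[].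
apply/negP => /(uniformP vS) hv.
have card_S : #|S| = #|S :\ x|.+1 by rewrite (cardsD1 x S) xS.
have hSx : homogeneous adj S (S :\ x).
  apply/homogeneousP; split=> [|w wS]; first exact: subsetDl.
  rewrite !inE wS andbT negbK => /eqP-> {w wS}.
  by case: hv => h; [left|right] => z /setD1P[zx zS];
    have [lz rz] := Vx_adj vx zS zx; rewrite -?lz -?rz h.
have := prime_hom_trivial pS hSx; rewrite card_S ltnn -ltnS -card_S.
by move=> /(_ S_gt2).
Qed.

Lemma uniform_setU A B v :
  v \notin A :|: B -> A :&: B != set0 ->
  homogeneous adj (v |: A) A -> homogeneous adj (v |: B) B ->
  homogeneous adj (v |: (A :|: B)) (A :|: B).
Proof.
move=> vAB /set0Pn[w /setIP[wA wB]].
have /andP[vA vB] : (v \notin A) && (v \notin B) by rewrite -negb_or -in_setU.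
move=> /(uniformP vA) hA /(uniformP vB) hB; apply/(uniformP vAB).
case: hA => hA; case: hB => hB.
- by left=> z /setUP[]; [exact: hA|exact: hB].
- by have := adj_asym (hA w wA); rewrite hB.
- by have := adj_asym (hB w wB); rewrite hA.
- by right=> z /setUP[]; [exact: hA|exact: hB].
Qed.

End Tournaments.

Theorem proposition3p6 (T : finType) (adj : rel T) (u : T) (H1 H2 : {set T}) :
  is_tournament adj ->
  prime_tour adj [set: T] ->
  H1 != set0 -> H2 != set0 ->
  prime_tour adj H1 -> prime_tour adj H2 ->
  H1 :|: H2 = [set: T] :\ u ->
  decomposable adj (u |: H1) -> decomposable adj (u |: H2) ->
  prime_tour adj (H1 :&: H2) -> 3 <= #|H1 :&: H2| ->
  (exists2 x, x \in H1 :\: H2 & u \in Vx adj H1 x) \/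
  (exists2 y, y \in H2 :\: H1 & u \in Vx adj H2 y).
Proof.
move=> tourn pG _ _ p1 p2 eU d1 d2 p12 c12.
have eT : (u |: H1) :|: (u |: H2) = [set: T] by rewrite -setUUr eU setD1K.
have [u1 u2] : u \notin H1 /\ u \notin H2.
  by apply/andP; rewrite -negb_or -in_setU eU !inE eqxx.
have T_gt2 : 2 < #|[set: T]| := leq_trans c12 (subset_leq_card (subsetT _)).
have [tw1|[x x12 ux]|uni1] := Vx_or_uniform_in H2 p1 u1 d1; first by left.
all: have [tw2|[y y12 uy]|uni2] := Vx_or_uniform_in H1 p2 u2 d2; first by right.
all: exfalso; try rewrite setIC in y12.
- have exy : x = y.
    apply: (Vx_uniq tourn p12 c12 x12 y12).
      exact: Vx_sub ux x12 (subsetIl _ _).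
    exact: Vx_sub uy y12 (subsetIr _ _).
  subst y; move: ux uy; rewrite !inE => /andP[_ hx1] /andP[_ hx2].
  have := hom_setU hx1 hx2; rewrite eT => /(prime_hom_trivial pG).
  have xu : x != u by apply: contraNneq u1 => <-; case/setIP: x12.
  by rewrite cards2 eq_sym xu => /(_ isT); rewrite leqNgt T_gt2.
- case/negP: (Vx_not_uniform tourn p12 c12 x12 (Vx_sub ux x12 (subsetIl _ _))).
  exact: uniform_sub u2 (subsetIr _ _) uni2.
- case/negP: (Vx_not_uniform tourn p12 c12 y12 (Vx_sub uy y12 (subsetIr _ _))).
  exact: uniform_sub u1 (subsetIl _ _) uni1.
- have u12 : u \notin H1 :|: H2 by rewrite eU !inE eqxx.
  have H12_neq0 : H1 :&: H2 != set0 by rewrite -card_gt0 (leq_trans _ c12).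
  have := uniform_setU tourn u12 H12_neq0 uni1 uni2.
  rewrite setUUr eT eU => /(prime_hom_trivial pG).
  by rewrite (cardsD1 u) inE add1n ltnn in T_gt2 * => /(_ T_gt2).
Qed.
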